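(* Fix $n\ge2$. There exists a sequence $\{(\mathcal{F}_k,M_k)\}_{k\ge0}$ where each $\mathcal{F}_k$ is a simplicial polyhedral fan in $\mathbb{R}^n$ based on the columns of a real matrix $M_k$ with $n$ rows, such that $$\operatorname{diam}\bigl(\mathcal{G}(\mathcal{F}_k)\bigr)=2^{k+1}-1=2\left(\frac{\Delta(M_k)}{\Delta_{\min}(\mathcal{F}_k,M_k)}\right)^{1/\log_2 n}-1.$$
   Context: A polyhedral fan in $\mathbb{R}^n$ is a family $\mathcal{F}$ of polyhedral cones such that every face of a member is a member, the intersection of any two members is a common face of both, and there are no inclusion-maximal members of dimension less than $n$. It is simplicial if each $n$-dimensional member is a simplicial cone. It is based on the columns of $M\in\mathbb{R}^{n\times p}$ if each member is $\operatorname{cone}(M_{*\mathcal{F}})$ for some set $\mathcal{F}$ of column indices. $\Gamma_n(\mathcal{F})$ denotes the set of $n$-dimensional members. The graph $\mathcal{G}(\mathcal{F})$ has vertex set $\Gamma_n(\mathcal{F})$ and an edge between $\mathcal{F}_1,\mathcal{F}_2$ iff $\dim(\mathcal{F}_1\cap\mathcal{F}_2)=n-1$. For a simplicial fan, $\Delta_{\min}(\mathcal{F},M)=\min_{\mathcal{F}\in\Gamma_n(\mathcal{F})}|\det M_{*\mathcal{F}}|$, where $\mathcal{F}$ is the set of $n$ column indices generating the cone. $\Delta(M)$ is the maximum absolute value of $n\times n$ minors of $M$. *)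

From HB Require Import structures.
From mathcomp Require Import all_boot all_order all_algebra.
From mathcomp Require Import boolp reals exp.
Set Implicit Arguments. Unset Strict Implicit. Unset Printing Implicit Defensive.
Import Order.TTheory GRing.Theory Num.Theory.
Local Open Scope ring_scope.

Section Fans.
Variable R : realType.
Variables n p : nat.

Definition vset := 'cV[R]_n -> Prop.

Definition mcone (M : 'M[R]_(n, p)) (S : {set 'I_p}) : vset :=
  fun x => exists lam : 'cV[R]_p,
    (forall j, 0 <= lam j 0) /\ (forall j, j \notin S -> lam j 0 = 0) /\ x = M *m lam.

Definition vsubset (X Y : vset) := forall x, X x -> Y x.
Definition vinter (X Y : vset) : vset := fun x => X x /\ Y x.
Definition veq (X Y : vset) := forall x, X x <-> Y x.

Definition is_face (F C : vset) :=
  exists c : 'cV[R]_n, (forall y, C y -> 0 <= (c^T *m y) 0 0) /\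
    veq F (fun x => C x /\ (c^T *m x) 0 0 = 0).

(* X has dimension d: the linear span of X has dimension d. *)
Definition has_dim (X : vset) (d : nat) :=
  (exists B : 'M[R]_(n, d), \rank B = d /\ forall j, X (col j B)) /\
  (forall B : 'M[R]_(n, d.+1), (forall j, X (col j B)) -> (\rank B <= d)%N).

Definition is_fan (M : 'M[R]_(n, p)) (Fam : {set {set 'I_p}}) :=
  [/\ (forall S T, S \in Fam -> T \in Fam -> veq (mcone M S) (mcone M T) -> S = T),
      (forall S F, S \in Fam -> is_face F (mcone M S) ->
          exists2 T, T \in Fam & veq (mcone M T) F),
      (forall S T, S \in Fam -> T \in Fam ->
          is_face (vinter (mcone M S) (mcone M T)) (mcone M S) /\
          is_face (vinter (mcone M S) (mcone M T)) (mcone M T)) &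
      (forall S, S \in Fam ->
          (forall T, T \in Fam -> vsubset (mcone M S) (mcone M T) ->
              veq (mcone M S) (mcone M T)) ->
          has_dim (mcone M S) n)].

(* simplicial: each n-dimensional member is generated by exactly n columns
   (which are then linearly independent). *)
Definition is_simplicial (M : 'M[R]_(n, p)) (Fam : {set {set 'I_p}}) :=
  forall S, S \in Fam -> has_dim (mcone M S) n -> #|S| = n.

Definition Gamma_n (M : 'M[R]_(n, p)) (Fam : {set {set 'I_p}}) (S : {set 'I_p}) :=
  S \in Fam /\ has_dim (mcone M S) n.

Definition fan_adj (M : 'M[R]_(n, p)) (S T : {set 'I_p}) :=
  has_dim (vinter (mcone M S) (mcone M T)) n.-1.

Definition absdet (M : 'M[R]_(n, p)) (S : {set 'I_p}) : R :=
  \big[Num.max/0]_(f : {ffun 'I_n -> 'I_p} | f @: setT == S) `|\det (colsub f M)|.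

Definition Delta (M : 'M[R]_(n, p)) : R :=
  \big[Num.max/0]_(f : {ffun 'I_n -> 'I_p}) `|\det (colsub f M)|.

(* Delta_min(F, M) (the initial value Delta M is >= every term, so this is
   the minimum over Gamma_n whenever Gamma_n is nonempty) *)
Definition Delta_min (M : 'M[R]_(n, p)) (Fam : {set {set 'I_p}}) : R :=
  \big[Num.min/Delta M]_(S in Fam | `[< has_dim (mcone M S) n >]) absdet M S.
End Fans.

Section Graph.
Variable T : Type.
Variables (V : T -> Prop) (e : T -> T -> Prop).

Fixpoint reach (k : nat) (u v : T) : Prop :=
  match k with
  | 0 => u = v
  | k'.+1 => reach k' u v \/ exists w, V w /\ reach k' u w /\ e w v
  end.

Definition graph_diam (d : nat) :=
  (forall u v, V u -> V v -> reach d u v) /\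
  (forall d', (forall u v, V u -> V v -> reach d' u v) -> (d <= d')%N).
End Graph.

From HB Require Import structures.
From mathcomp Require Import all_boot all_order all_algebra.
From mathcomp Require Import boolp reals exp.
From mathcomp Require Import fingroup perm zify ring lra.
Set Implicit Arguments. Unset Strict Implicit. Unset Printing Implicit Defensive.
Import Order.TTheory GRing.Theory Num.Theory.
Local Open Scope ring_scope.

(* Put the 2^(k+1) + 1 vertices of a convex polygon, in counterclockwise order, on the
   upper half of the l1 unit circle of the first two coordinates, and add the unit
   vectors e_3, ..., e_n.  The cones spanned by two consecutive vertices and these unit
   vectors form a simplicial fan: functionals dual to the generators of a cone cut out
   its faces, and by convexity two cones are separated by a functional vanishing on
   their common generators.  Only consecutive cones share a facet, so the fan graph is
   a path on 2^(k+1) nodes.  Each cone has determinant 2^-k and, by Hadamard's bound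
   with l1 column norms, every n x n minor of these columns is at most 1.  One more
   column, n^k 2^-k e_1, lies in no cone and makes Delta(M) = n^k 2^-k; hence
   Delta / Delta_min = n^k, whose (log_2 n)-th root is 2^k. *)

Section VectorSets.
Variables (R : realType) (n : nat).
Implicit Types X Y Z : vset R n.

Lemma veq_sym X Y : veq X Y -> veq Y X.
Proof. by move=> eXY x; split=> /eXY. Qed.

Lemma veq_trans X Y Z : veq X Y -> veq Y Z -> veq X Z.
Proof. by move=> eXY eYZ x; split=> [/eXY/eYZ|/eYZ/eXY]. Qed.

Lemma vinterC X Y : veq (vinter X Y) (vinter Y X).
Proof. by move=> x; split=> -[]. Qed.

Lemma has_dim_veq X Y d : veq X Y -> has_dim X d -> has_dim Y d.
Proof.
move=> eXY [[B [rB XB]] maxX]; split; first by exists B; split=> // j; apply/eXY.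
by move=> B' YB'; apply: maxX => j; apply/eXY.
Qed.

Lemma is_face_veq (F G C : vset R n) : veq F G -> is_face F C -> is_face G C.
Proof.
by move=> eFG [c [c_ge0 eF]]; exists c; split=> //; apply: veq_trans (veq_sym eFG) eF.
Qed.

End VectorSets.

Lemma psumr_mul_eq0 (R : numDomainType) (I : finType) (w l : I -> R) :
  (forall j, 0 <= w j * l j) -> \sum_j w j * l j = 0 ->
  forall j, w j != 0 -> l j = 0.
Proof.
move=> ge0 sum0 j wj_neq0.
have /eqP := @psumr_eq0P _ _ predT _ (fun j _ => ge0 j) sum0 j isT.
by rewrite mulf_eq0 (negbTE wj_neq0) => /eqP.
Qed.

Section Cones.
Variables (R : realType) (n p : nat) (M : 'M[R]_(n, p)).
Implicit Types (A B S T : {set 'I_p}) (c : 'cV[R]_n) (lam : 'cV[R]_p).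

Definition colval c (j : 'I_p) : R := (c^T *m M) 0 j.

Lemma colval_mulmx c lam : (c^T *m (M *m lam)) 0 0 = \sum_j colval c j * lam j 0.
Proof. by rewrite mulmxA mxE. Qed.

Lemma colval_col c j : (c^T *m col j M) 0 0 = colval c j.
Proof. by rewrite colE mulmxA -colE mxE. Qed.

Lemma colval_sum (I : finType) (P : pred I) (c_ : I -> 'cV[R]_n) j :
  colval (\sum_(i | P i) c_ i) j = \sum_(i | P i) colval (c_ i) j.
Proof. by rewrite /colval linear_sum mulmx_suml summxE. Qed.

Lemma colvalD c d j : colval (c + d) j = colval c j + colval d j.
Proof. by rewrite /colval linearD mulmxDl mxE. Qed.

Lemma colvalZ a c j : colval (a *: c) j = a * colval c j.
Proof. by rewrite /colval linearZ -scalemxAl mxE. Qed.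

Lemma colval_delta r j : colval (delta_mx r 0) j = M r j.
Proof. by rewrite /colval trmx_delta -rowE mxE. Qed.

Lemma mcone_col S j : j \in S -> mcone M S (col j M).
Proof.
move=> jS; exists (delta_mx j 0); rewrite -colE; split=> [k|]; first by rewrite mxE ler0n.
by split=> // k; rewrite mxE; case: eqP => // -> /negbTE; rewrite jS.
Qed.

Lemma mcone_subset S T : S \subset T -> vsubset (mcone M S) (mcone M T).
Proof.
move=> sST x [lam [lam_ge0 [lamS ->]]]; exists lam; split=> //; split=> // j jT.
by apply: lamS; apply: contra jT; apply: (subsetP sST).
Qed.

Lemma mcone0 x : mcone M set0 x -> x = 0.
Proof.
move=> [lam [_ [lam0 ->]]]; suff -> : lam = 0 by rewrite mulmx0.
by apply/matrixP => j i; rewrite ord1 lam0 ?inE ?mxE.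
Qed.

Lemma colval_ge0 S c : (forall y, mcone M S y -> 0 <= (c^T *m y) 0 0) ->
  {in S, forall j, 0 <= colval c j}.
Proof. by move=> c_ge0 j /mcone_col/c_ge0; rewrite colval_col. Qed.

Lemma face_mcone S c : (forall y, mcone M S y -> 0 <= (c^T *m y) 0 0) ->
  veq (fun x => mcone M S x /\ (c^T *m x) 0 0 = 0)
      (mcone M [set j in S | colval c j == 0]).
Proof.
move=> c_ge0 x; have cS_ge0 := colval_ge0 c_ge0; split.
  move=> [[lam [lam_ge0 [lamS ->]]]]; rewrite colval_mulmx => sum0.
  exists lam; split=> //; split=> // j; rewrite inE negb_and => /orP[/lamS //|cj_neq0].
  apply: psumr_mul_eq0 sum0 _ cj_neq0 => i.
  by have [/cS_ge0 ci_ge0|/lamS ->] := boolP (i \in S); rewrite ?mulr0 ?mulr_ge0.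
move=> [lam [lam_ge0 [lamSc ->]]]; split.
  by exists lam; split=> //; split=> // j jS; apply: lamSc; rewrite inE (negbTE jS).
rewrite colval_mulmx big1 // => j _.
have [|/lamSc ->] := boolP (j \in [set j in S | colval c j == 0]); last by rewrite mulr0.
by rewrite inE => /andP[_ /eqP ->]; rewrite mul0r.
Qed.

Lemma mconeI_sep S T c :
  {in S :\: T, forall j, 0 < colval c j} -> {in T :\: S, forall j, colval c j < 0} ->
  {in S :&: T, forall j, colval c j = 0} ->
  vsubset (vinter (mcone M S) (mcone M T)) (mcone M (S :&: T)).
Proof.
move=> cSpos cTneg cST0 x [[lam [lam_ge0 [lamS ex]]] [mu [mu_ge0 [muT ex']]]].
have lam_terms_ge0 j : 0 <= colval c j * lam j 0.
  have [jS|/lamS ->] := boolP (j \in S); last by rewrite mulr0.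
  have [jT|jT] := boolP (j \in T); first by rewrite cST0 ?inE ?jS // mul0r.
  by rewrite mulr_ge0 // ltW // cSpos // inE jS jT.
have mu_terms_le0 j : colval c j * mu j 0 <= 0.
  have [jT|/muT ->] := boolP (j \in T); last by rewrite mulr0.
  have [jS|jS] := boolP (j \in S); first by rewrite cST0 ?inE ?jS // mul0r.
  by rewrite mulr_le0_ge0 // ltW // cTneg // inE jS jT.
have sum0 : \sum_j colval c j * lam j 0 = 0.
  apply/eqP; rewrite eq_le sumr_ge0 // andbT.
  by rewrite -colval_mulmx -ex ex' colval_mulmx; apply: sumr_le0 => j _.
exists lam; split=> //; split=> // j; rewrite inE negb_and => /orP[/lamS //|jT].
have [jS|/lamS //] := boolP (j \in S).
by apply: (psumr_mul_eq0 lam_terms_ge0 sum0); rewrite gt_eqF // cSpos // inE jS jT.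
Qed.

Lemma rank_mcone S d (B : 'M[R]_(n, d)) :
  (forall l, mcone M S (col l B)) -> (\rank B <= #|S|)%N.
Proof.
move=> B_cone; have /all_sig[lam lamP] := fun l => cid (B_cone l).
pose Lam : 'M[R]_(#|S|, d) := \matrix_(k, l) lam l (enum_val k) 0.
suff -> : B = colsub enum_val M *m Lam.
  by apply: leq_trans (mxrankM_maxl _ _) (rank_leq_col _).
apply/matrixP => i l; have [_ [lamS eBl]] := lamP l.
have -> : B i l = col l B i 0 by rewrite mxE.
rewrite eBl !mxE (bigID (mem S)) /= [X in _ + X]big1 ?addr0; last first.
  by move=> j /lamS ->; rewrite mulr0.
by rewrite big_enum_val; apply: eq_bigr => k _; rewrite !mxE.
Qed.

Lemma fan_adjC S T : fan_adj M S T -> fan_adj M T S.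
Proof. exact/has_dim_veq/vinterC. Qed.

Lemma has_dim_mcone_le S d : has_dim (mcone M S) d -> (d <= #|S|)%N.
Proof. by move=> [[B [rB B_cone]] _]; rewrite -rB; apply: rank_mcone. Qed.

Section DualSystem.
Variables (S0 : {set 'I_p}) (phi : 'I_p -> 'cV[R]_n).
Hypothesis phi_dual : {in S0 &, forall i j, colval (phi i) j = (i == j)%:R}.

Lemma dual_coord lam i : (forall j, j \notin S0 -> lam j 0 = 0) -> i \in S0 ->
  ((phi i)^T *m (M *m lam)) 0 0 = lam i 0.
Proof.
move=> lamS0 iS0; rewrite colval_mulmx (bigD1 i) //= phi_dual // eqxx mul1r.
rewrite big1 ?addr0 // => j ji; have [jS0|/lamS0 ->] := boolP (j \in S0); last by rewrite mulr0.
by rewrite phi_dual // eq_sym (negbTE ji) mul0r.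
Qed.

Lemma dual_col_neq0 j : j \in S0 -> col j M != 0.
Proof.
move=> jS0; apply/eqP => colj0; have := colval_col (phi j) j.
by rewrite colj0 mulmx0 mxE phi_dual // eqxx => /esym/eqP; rewrite oner_eq0.
Qed.

Lemma dual_mconeI A B : A \subset S0 -> B \subset S0 ->
  vsubset (vinter (mcone M A) (mcone M B)) (mcone M (A :&: B)).
Proof.
move=> sAS0 sBS0 x [[lam [lam_ge0 [lamA ex]]] [mu [_ [muB ex']]]].
have suppS0 (X : {set 'I_p}) (nu : 'cV[R]_p) : X \subset S0 ->
    (forall j, j \notin X -> nu j 0 = 0) -> forall j, j \notin S0 -> nu j 0 = 0.
  by move=> sXS0 nuX j /(contra (subsetP sXS0 j))/nuX.
have lamS0 := suppS0 _ _ sAS0 lamA; have muS0 := suppS0 _ _ sBS0 muB.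
have lam_mu j : lam j 0 = mu j 0.
  have [jS0|jS0] := boolP (j \in S0); last by rewrite lamS0 ?muS0.
  by rewrite -(dual_coord lamS0 jS0) -(dual_coord muS0 jS0) -ex -ex'.
exists lam; split=> //; split=> // j; rewrite inE negb_and => /orP[/lamA //|/muB].
by rewrite lam_mu.
Qed.

Lemma dual_face A S : A \subset S -> S \subset S0 -> is_face (mcone M A) (mcone M S).
Proof.
move=> sAS sSS0; pose c := \sum_(i in S0 :\: A) phi i.
have c_val j : j \in S0 -> colval c j = (j \notin A)%:R.
  move=> jS0; rewrite colval_sum; have [jA|jA] := boolP (j \in A).
    rewrite big1 // => i /setDP[iS0 iA]; rewrite phi_dual //.
    by case: eqP iA => // ->; rewrite jA.
  rewrite (bigD1 j) ?inE ?jA ?jS0 //= phi_dual // eqxx big1 ?addr0 //.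
  by move=> i /andP[/setDP[iS0 _] ij]; rewrite phi_dual // (negbTE ij).
have c_ge0 y : mcone M S y -> 0 <= (c^T *m y) 0 0.
  move=> [lam [lam_ge0 [lamS ->]]]; rewrite colval_mulmx; apply: sumr_ge0 => j _.
  have [jS|/lamS ->] := boolP (j \in S); last by rewrite mulr0.
  by rewrite c_val ?(subsetP sSS0) // mulr_ge0 ?ler0n.
exists c; split=> //; apply: veq_sym; apply: veq_trans (face_mcone c_ge0) _.
suff -> : [set j in S | colval c j == 0] = A by [].
apply/setP => j; rewrite inE; have [jS|jS] := boolP (j \in S); last first.
  by apply/esym/negbTE; apply: contra jS; apply: (subsetP sAS).
by rewrite c_val ?(subsetP sSS0) // pnatr_eq0 eqb0 negbK.
Qed.

Lemma dual_has_dim A : A \subset S0 -> has_dim (mcone M A) #|A|.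
Proof.
move=> sAS0; split; last by move=> B; apply: rank_mcone.
exists (colsub enum_val M); split; last first.
  by move=> l; rewrite col_colsub; apply/mcone_col/enum_valP.
apply/eqP; rewrite eqn_leq rank_leq_col /=.
pose Phi : 'M[R]_(#|A|, n) := \matrix_(l, i) phi (enum_val l) i 0.
have PhiB : Phi *m colsub enum_val M = 1%:M.
  have inS0 (k : 'I_#|A|) : enum_val k \in S0 by apply: (subsetP sAS0); apply: enum_valP.
  apply/matrixP => l l'.
  rewrite [RHS]mxE -(inj_eq enum_val_inj) -phi_dual // mxE.
  by rewrite /colval !mxE; apply: eq_bigr => i _; rewrite !mxE.
by rewrite -[X in (X <= _)%N](mxrank1 R #|A|) -PhiB mxrankM_maxr.
Qed.

End DualSystem.

End Cones.

Lemma normr_det_le_prod_sum (R : numDomainType) n (B : 'M[R]_n) :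
  `|\det B| <= \prod_j \sum_i `|B i j|.
Proof.
pose term (f : {ffun 'I_n -> 'I_n}) := \prod_j `|B (f j) j|.
have term_ge0 f : 0 <= term f by apply: prodr_ge0 => j _.
have perm_ffun_inj : injective (fun s : 'S_n => [ffun i => s i]).
  by move=> s t /ffunP e; apply/permP => i; have := e i; rewrite !ffunE.
rewrite -det_tr bigA_distr_bigA /=; apply: le_trans (ler_norm_sum _ _ _) _.
have -> : \sum_(s : 'S_n) `|(-1) ^+ s * \prod_i B^T i (s i)| =
          \sum_(f in [set [ffun i => s i] | s : 'S_n]) term f.
  rewrite big_imset /=; last by move=> s t _ _; apply: perm_ffun_inj.
  apply: eq_bigr => s _; rewrite normrM normrX normrN1 expr1n mul1r normr_prod.
  by apply: eq_bigr => i _; rewrite mxE ffunE.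
rewrite big_mkcond; apply: ler_sum => f _; case: ifP => // _; exact: term_ge0.
Qed.

Lemma det_mx22 (R : comNzRingType) (A : 'M[R]_2) : \det A = A 0 0 * A 1 1 - A 0 1 * A 1 0.
Proof.
rewrite (expand_det_row _ 0) !big_ord_recl big_ord0 /cofactor !det_mx11 !mxE /=.
have -> : lift 0 0 = 1 :> 'I_2 by apply/val_inj.
have -> : lift 1 0 = 0 :> 'I_2 by apply/val_inj.
by rewrite expr0 expr1; ring.
Qed.

Lemma det_id_outside_ul2 (R : comNzRingType) m (B : 'M[R]_(m.+2)) :
  (forall i j : 'I_(m.+2), (2 <= i)%N || (2 <= j)%N -> B i j = (i == j)%:R) ->
  \det B = B 0 0 * B 1 1 - B 0 1 * B 1 0.
Proof.
move=> B_id; pose ul := \matrix_(i < 2, j < 2) B (lshift m i) (lshift m j).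
have eB : B = block_mx ul 0 0 1%:M :> 'M_(2 + m).
  apply/matrixP => i j; rewrite -[i]splitK -[j]splitK.
  case: (split i) => i'; case: (split j) => j' /=.
  - by rewrite block_mxEul mxE.
  - rewrite block_mxEur mxE B_id /= ?orbT // -val_eqE /=.
    by case: eqP => //; have := ltn_ord i'; lia.
  - rewrite block_mxEdl mxE B_id //= -val_eqE /=.
    by case: eqP => //; have := ltn_ord j'; lia.
  - by rewrite block_mxEdr mxE B_id //= -val_eqE /= eqn_add2l.
rewrite {1}eB (det_ublock ul (0 : 'M_(2, m)) (1%:M : 'M_m)) det1 mulr1 det_mx22 !mxE.
have -> : lshift m (0 : 'I_2) = 0 by apply/val_inj.
by have -> : lshift m (1 : 'I_2) = 1 by apply/val_inj.
Qed.

Section Polygon.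
Variables (R : realType) (k : nat).

Definition apex : nat := 2 ^ k.
Definition nedges : nat := apex.*2.
Definition scale : R := apex%:R.

(* Vertex [t] of the polygon, for [t <= nedges], is [(px t, py t)]; the vertices
   run counterclockwise on the upper half of the unit circle of the l1 norm, from
   [(1, 0)] through the apex [(0, 1)] to [(-1, 0)]. *)
Definition height (t : nat) : R := if (t <= apex)%N then t%:R else nedges%:R - t%:R.
Definition px (t : nat) : R := (scale - t%:R) / scale.
Definition py (t : nat) : R := height t / scale.
Definition pdet (s t : nat) : R := px s * py t - py s * px t.

Lemma apex_gt0 : (0 < apex)%N. Proof. by rewrite expn_gt0. Qed.
Lemma scale_ge1 : 1 <= scale. Proof. by rewrite ler1n apex_gt0. Qed.
Lemma scale_gt0 : 0 < scale. Proof. by rewrite ltr0n apex_gt0. Qed.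
Lemma nedgesE : nedges%:R = 2 * scale :> R.
Proof. by rewrite /nedges -muln2 natrM mulrC. Qed.

Lemma pdetE s t :
  pdet s t = ((scale - s%:R) * height t - height s * (scale - t%:R)) / (scale * scale).
Proof. by rewrite /pdet /px /py; field; rewrite gt_eqF // scale_gt0. Qed.

Lemma pdet_swap s t : pdet t s = - pdet s t. Proof. by rewrite /pdet; ring. Qed.
Lemma pdet_diag t : pdet t t = 0. Proof. by rewrite /pdet; ring. Qed.

Lemma pdet_ge0 s t : (s <= t)%N -> (t <= nedges)%N -> 0 <= pdet s t.
Proof.
move=> st tN; rewrite pdetE; apply: divr_ge0; last by rewrite mulr_ge0 // ltW // scale_gt0.
have sc_gt0 := scale_gt0; have N2 := nedgesE.
have hst : s%:R <= t%:R :> R by rewrite ler_nat.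
have htN : t%:R <= nedges%:R :> R by rewrite ler_nat.
have hs0 : 0 <= s%:R :> R by [].
rewrite /height; case: ifP => ta; case: ifP => sa.
- have : t%:R <= scale by rewrite /scale ler_nat.
  nra.
- by move: sa ta; lia.
- have : s%:R <= scale by rewrite /scale ler_nat.
  have : scale <= t%:R by rewrite /scale ler_nat; lia.
  nra.
- have : scale <= s%:R by rewrite /scale ler_nat; lia.
  nra.
Qed.

Lemma pdet_gt0 s t : (s < t)%N -> (t <= nedges)%N -> (0 < s)%N || (t < nedges)%N ->
  0 < pdet s t.
Proof.
move=> st tN not_ends; rewrite pdetE; apply: divr_gt0; last by rewrite mulr_gt0 // scale_gt0.
have sc_gt0 := scale_gt0; have N2 := nedgesE.
have hst : s%:R + 1 <= t%:R :> R by rewrite natr1 ler_nat.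
have htN : t%:R <= nedges%:R :> R by rewrite ler_nat.
have hs0 : 0 <= s%:R :> R by [].
rewrite /height; case: ifP => ta; case: ifP => sa.
- have : t%:R <= scale by rewrite /scale ler_nat.
  nra.
- by move: sa ta; lia.
- have : s%:R <= scale by rewrite /scale ler_nat.
  have : scale + 1 <= t%:R by rewrite /scale natr1 ler_nat; lia.
  have [s0|s_gt0] := posnP s.
    have : t%:R + 1 <= nedges%:R :> R by rewrite natr1 ler_nat; move: not_ends; rewrite s0; lia.
    rewrite s0 mul0r subr0; nra.
  have : 1 <= s%:R :> R by rewrite ler1n.
  nra.
- have : scale <= s%:R by rewrite /scale ler_nat; lia.
  nra.
Qed.

Lemma pdet_succ t : (t < nedges)%N -> pdet t t.+1 = scale^-1.
Proof.
move=> tN; have sc_neq0 : scale != 0 by rewrite gt_eqF // scale_gt0.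
rewrite pdetE /height -natr1; case: ifP => ta; case: ifP => sa.
- by field.
- by move: sa ta; lia.
- have -> : t = apex by lia.
  by rewrite nedgesE; field.
- by rewrite nedgesE; field.
Qed.

Lemma l1_norm_vertex t : (t <= nedges)%N -> `|px t| + `|py t| = 1.
Proof.
move=> tN; have sc_gt0 := scale_gt0; have N2 := nedgesE.
have htN : t%:R <= nedges%:R :> R by rewrite ler_nat.
rewrite /px /py /height; case: ifP => ta.
  have t_le : t%:R <= scale by rewrite /scale ler_nat.
  rewrite !ger0_norm ?divr_ge0 ?subr_ge0 ?(ltW sc_gt0) //.
  by field; rewrite gt_eqF.
have t_ge : scale <= t%:R by rewrite /scale ler_nat; lia.
rewrite ler0_norm ?ger0_norm.
- by rewrite N2; field; rewrite gt_eqF.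
- by rewrite divr_ge0 ?subr_ge0 ?(ltW sc_gt0).
- by rewrite ler_pdivrMr // mul0r subr_le0.
Qed.

Lemma px_apex : px apex = 0. Proof. by rewrite /px subrr mul0r. Qed.
Lemma py_apex : py apex = 1.
Proof. by rewrite /py /height leqnn divff // gt_eqF // scale_gt0. Qed.

End Polygon.

Lemma normr_det_colsub_img (R : numDomainType) n p (M : 'M[R]_(n, p))
    (f g : 'I_n -> 'I_p) :
  injective f -> injective g -> f @: setT = g @: setT ->
  `|\det (colsub f M)| = `|\det (colsub g M)|.
Proof.
move=> f_inj g_inj fg_img; pose s j := odflt j [pick l | g l == f j].
have gsE j : g (s j) = f j.
  rewrite /s; case: pickP => [l /eqP //| none] /=.
  have : f j \in g @: setT by rewrite -fg_img imset_f ?inE.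
  by case/imsetP => l _ fjE; move: (none l); rewrite fjE eqxx.
have s_inj : injective s by move=> i j sij; apply: f_inj; rewrite -!gsE sij.
have -> : colsub f M = col_perm (perm s_inj) (colsub g M).
  by apply/matrixP => i j; rewrite !mxE permE gsE.
by rewrite col_permE det_mulmx det_perm normrM normrX normrN1 expr1n mulr1.
Qed.

Lemma absdet_colsub (R : realType) n p (M : 'M[R]_(n, p)) S
    (g : {ffun 'I_n -> 'I_p}) :
  injective g -> g @: setT = S -> absdet M S = `|\det (colsub g M)|.
Proof.
move=> g_inj gS; apply/le_anti/andP; split; last first.
  by apply: le_bigmax_cond; rewrite gS.
apply: bigmax_le => [|f /eqP fS]; first exact: normr_ge0.
have /imset_injP f_inj_in : #|f @: setT| == #|[set: 'I_n]| by rewrite fS -gS card_imset.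
have f_inj : injective f by move=> i j; apply: f_inj_in; rewrite inE.
by rewrite (normr_det_colsub_img _ f_inj g_inj) // fS gS.
Qed.

Section Walks.
Variables (T : Type) (V : T -> Prop) (e : T -> T -> Prop).

Lemma reach_le d d' u v : (d <= d')%N -> reach V e d u v -> reach V e d' u v.
Proof. by move=> /subnK <-; elim: (d' - d)%N => [|i IH] //= /IH; left. Qed.

Lemma reach_path (f : nat -> T) d :
  (forall i, (i < d)%N -> V (f i) /\ e (f i) (f i.+1)) -> reach V e d (f 0%N) (f d).
Proof.
elim: d => [|d IH] //= fP; right; exists (f d); have [Vfd efd] := fP d (ltnSn d).
by split=> //; split=> //; apply: IH => i /ltnW; apply: fP.
Qed.

End Walks.

Section Construction.
Variables (R : realType) (m k : nat).

Local Notation N := (nedges k).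
Local Notation sc := (scale R k).
Local Notation px := (px R k).
Local Notation py := (py R k).
Local Notation pdet := (pdet R k).
Local Notation p := (N.+1 + m).+1.
Implicit Types S T : {set 'I_p}.

Definition inflator : R := ((m.+2) ^ k)%:R / sc.

(* Columns [0..N] are the polygon vertices in rows [0] and [1], column [N+1] is
   [inflator] times the unit vector of row [0] (it lies in no cone and only raises
   [Delta]), and column [N+1+i], for [1 <= i <= m], is the unit vector of row [i+1]. *)
Definition xrow (j : nat) : R :=
  if (j <= N)%N then px j else if j == N.+1 then inflator else 0.
Definition yrow (j : nat) : R := if (j <= N)%N then py j else 0.
Definition fanmx : 'M[R]_(m.+2, p) :=
  \matrix_(i, j) if i == 0 :> nat then xrow j else if i == 1 :> nat then yrow j
                 else (i == (j - N)%N :> nat)%:R.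

Lemma xrow_vertex j : (j <= N)%N -> xrow j = px j. Proof. by rewrite /xrow => ->. Qed.
Lemma yrow_vertex j : (j <= N)%N -> yrow j = py j. Proof. by rewrite /yrow => ->. Qed.
Lemma xrow_high j : (N.+2 <= j)%N -> xrow j = 0.
Proof. by move=> hj; rewrite /xrow; case: ifP; first lia; case: eqP => //; lia. Qed.
Lemma yrow_high j : (N.+2 <= j)%N -> yrow j = 0.
Proof. by move=> hj; rewrite /yrow; case: ifP => //; lia. Qed.

Lemma fanmx_high (i : 'I_(m.+2)) (j : 'I_p) :
  (N.+2 <= j)%N -> fanmx i j = (i == (j - N)%N :> nat)%:R.
Proof.
move=> hj; rewrite mxE xrow_high ?yrow_high //.
case: ifP => [/eqP i0|_]; [|case: ifP => [/eqP i1|_] //]; rewrite ?i0 ?i1;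
  by case: eqP => //; lia.
Qed.

Lemma fanmx_low (i : 'I_(m.+2)) (j : 'I_p) : (j <= N.+1)%N -> (2 <= i)%N -> fanmx i j = 0.
Proof.
move=> hj hi; rewrite mxE; case: ifP => [/eqP|_]; first lia.
by case: ifP => [/eqP|_]; first lia; case: eqP => //; lia.
Qed.

Definition planar (al be : R) : 'cV[R]_(m.+2) :=
  \col_i if i == 0 :> nat then al else if i == 1 :> nat then be else 0.

Lemma colval_planar al be j : colval fanmx (planar al be) j = al * xrow j + be * yrow j.
Proof.
rewrite /colval !mxE !big_ord_recl big1 ?addr0 => [|i _]; last by rewrite !mxE mul0r.
by rewrite !mxE /=.
Qed.

Definition cross (s : nat) := planar (py s) (- px s).

Lemma colval_cross_vertex s (j : 'I_p) : (j <= N)%N -> colval fanmx (cross s) j = pdet j s.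
Proof. by move=> hj; rewrite colval_planar xrow_vertex ?yrow_vertex // /pdet; ring. Qed.

Lemma colval_cross_high s (j : 'I_p) : (N.+2 <= j)%N -> colval fanmx (cross s) j = 0.
Proof. by move=> hj; rewrite colval_planar xrow_high ?yrow_high // !mulr0 addr0. Qed.

Definition cell (t : nat) : {set 'I_p} :=
  [set j : 'I_p | (j == t :> nat) || (j == t.+1 :> nat) || (N.+2 <= j)%N].
Definition high : {set 'I_p} := [set j : 'I_p | (N.+2 <= j)%N].
Definition fan : {set {set 'I_p}} :=
  [set S : {set 'I_p} | [exists t : 'I_N, S \subset cell t]].

Definition dual (t : nat) (i : 'I_p) : 'cV[R]_(m.+2) :=
  if i == t :> nat then sc *: cross t.+1
  else if i == t.+1 :> nat then (- sc) *: cross t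
  else delta_mx (inord (i - N)) 0.

Lemma scale_pdet_succ t : (t < N)%N -> sc * pdet t t.+1 = 1.
Proof. by move=> tN; rewrite pdet_succ // divff // gt_eqF // scale_gt0. Qed.

Lemma dual_cell t : (t < N)%N ->
  {in cell t &, forall i j, colval fanmx (dual t i) j = (i == j)%:R}.
Proof.
move=> tN i j; rewrite !inE -val_eqE /= /dual => iC jC.
have one := scale_pdet_succ tN; have i_lt := ltn_ord i.
have [j_vert|j_high] : (j <= N)%N \/ (N.+2 <= j)%N by lia.
  case: ifP => [/eqP it|i_t]; [|case: ifP => [/eqP it1|i_t1]].
  - rewrite colvalZ colval_cross_vertex //.
    case/orP: jC => [/orP[]|] /eqP jt; rewrite ?jt ?pdet_diag ?one ?mulr0;
      by case: eqP => // *; lia.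
  - rewrite colvalZ colval_cross_vertex // -?mulNr.
    case/orP: jC => [/orP[]|] /eqP jt; rewrite ?jt ?pdet_diag ?mulr0;
      try by case: eqP => // *; lia.
    by rewrite pdet_swap mulrNN one; case: eqP => // *; lia.
  - rewrite colval_delta fanmx_low ?inordK; try lia.
    by case: eqP => // *; lia.
case: ifP => [/eqP it|i_t]; [|case: ifP => [/eqP it1|i_t1]].
- by rewrite colvalZ colval_cross_high // mulr0; case: eqP => // *; lia.
- by rewrite colvalZ colval_cross_high // mulr0; case: eqP => // *; lia.
rewrite colval_delta fanmx_high // inordK; last lia.
by congr (_%:R); apply/eqP; case: eqP => *; lia.
Qed.

Lemma colval_sep_vertex t u (j : 'I_p) : (j <= N)%N ->
  colval fanmx (cross t.+1 + cross u) j = pdet j t.+1 + pdet j u.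
Proof. by move=> hj; rewrite colvalD !colval_cross_vertex. Qed.

(* Convexity of the polygon makes [cross t.+1 + cross u] a separating functional. *)
Lemma cellI_lt t u : (t < u)%N -> (u < N)%N ->
  vsubset (vinter (mcone fanmx (cell t)) (mcone fanmx (cell u)))
          (mcone fanmx (cell t :&: cell u)).
Proof.
move=> tu uN; have inv_gt0 : 0 < sc^-1 by rewrite invr_gt0 scale_gt0.
apply: (mconeI_sep (c := cross t.+1 + cross u)) => j; rewrite !inE.
- move=> /andP[jnu jt]; rewrite colval_sep_vertex; last lia.
  have [jE|jE] : j = t :> nat \/ j = t.+1 :> nat by lia.
    rewrite jE pdet_succ; last lia.
    by have := @pdet_ge0 R k t u (ltnW tu) (ltnW uN); lra.
  by rewrite jE pdet_diag add0r pdet_gt0 //; lia.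
- move=> /andP[jnt ju]; rewrite colval_sep_vertex; last lia.
  rewrite !(pdet_swap _ _ _ j).
  have [jE|jE] : j = u :> nat \/ j = u.+1 :> nat by lia.
    by rewrite jE pdet_diag oppr0 addr0 oppr_lt0 pdet_gt0 //; lia.
  rewrite jE pdet_succ //; have : 0 <= pdet t.+1 u.+1 by apply: pdet_ge0; lia.
  lra.
- move=> /andP[jt ju]; have [j_high|j_vert] := leqP N.+2 j.
    by rewrite colvalD !colval_cross_high ?addr0.
  rewrite colval_sep_vertex; last lia.
  have [-> ->] : j = u :> nat /\ t.+1 = u by lia.
  by rewrite pdet_diag addr0.
Qed.

Lemma mcone_cellI t u : (t < N)%N -> (u < N)%N ->
  vsubset (vinter (mcone fanmx (cell t)) (mcone fanmx (cell u)))
          (mcone fanmx (cell t :&: cell u)).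
Proof.
move=> tN uN; case: (ltngtP t u) => [tu|ut|<-].
- exact: cellI_lt.
- by rewrite setIC => x /vinterC; apply: cellI_lt.
- by rewrite setIid => x [].
Qed.

Lemma fanP S : reflect (exists2 t, (t < N)%N & S \subset cell t) (S \in fan).
Proof.
rewrite inE; apply: (iffP existsP) => [[t sSt]|[t tN sSt]]; first by exists t.
by exists (Ordinal tN).
Qed.

Lemma cell_in_fan t : (t < N)%N -> cell t \in fan.
Proof. by move=> tN; apply/fanP; exists t. Qed.

Lemma fan_subset S T : S \in fan -> T \subset S -> T \in fan.
Proof. by move=> /fanP[t tN sSt] sTS; apply/fanP; exists t; last apply: subset_trans sSt. Qed.

Lemma mconeI_fan S T : S \in fan -> T \in fan ->
  veq (vinter (mcone fanmx S) (mcone fanmx T)) (mcone fanmx (S :&: T)).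
Proof.
move=> /fanP[t tN sSt] /fanP[u uN sTu] x; split; last first.
  by move=> xST; split; apply: mcone_subset xST; rewrite (subsetIl, subsetIr).
move=> [xS xT]; have xtu : mcone fanmx (cell t :&: cell u) x.
  by apply: mcone_cellI => //; split; [apply: mcone_subset xS | apply: mcone_subset xT].
have xSu : mcone fanmx (S :&: cell u) x.
  apply: mcone_subset (dual_mconeI (dual_cell tN) sSt (subsetIl _ _) (conj xS xtu)).
  exact: setIS _ (subsetIr _ _).
have xTSu : mcone fanmx (T :&: (S :&: cell u)) x.
  exact: (dual_mconeI (dual_cell uN) sTu (subsetIr _ _)).
by apply: mcone_subset xTSu; rewrite setICA setIS ?subsetIl.
Qed.

Lemma mcone_fan_subset S T : S \in fan -> T \in fan ->
  vsubset (mcone fanmx S) (mcone fanmx T) -> S \subset T.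
Proof.
move=> Sfan Tfan sST; apply/subsetP => j jS; apply/negPn/negP => jT.
have /fanP[t tN sSt] := Sfan.
have jfan : [set j] \in fan by apply: (fan_subset Sfan); rewrite sub1set.
have /mconeI_fan : vinter (mcone fanmx [set j]) (mcone fanmx T) (col j fanmx).
  by split; [|apply: sST]; apply: mcone_col; rewrite ?set11.
move=> /(_ jfan Tfan); rewrite (_ : _ :&: _ = set0) => [/mcone0/eqP|].
  by apply/negP/(dual_col_neq0 (dual_cell tN))/(subsetP sSt).
by apply/setP => i; rewrite !inE; case: eqP => // ->; rewrite (negbTE jT).
Qed.

Lemma card_high : #|high| = m.
Proof.
pose f (i : 'I_m) : 'I_p := inord (N.+2 + i).
have f_val i : f i = N.+2 + i :> nat by rewrite inordK //; have := ltn_ord i; lia.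
have -> : high = f @: setT.
  apply/setP => j; rewrite inE; apply/idP/imsetP => [j_high|[i _ ->]]; last first.
    by rewrite f_val leq_addr.
  have j_lt : (j - N.+2 < m)%N by have := ltn_ord j; lia.
  by exists (Ordinal j_lt) => //; apply: ord_inj; rewrite f_val /=; lia.
rewrite card_imset ?cardsT ?card_ord // => i i' /(congr1 (@nat_of_ord _)).
rewrite !f_val => /eqP.
by rewrite eqn_add2l => /eqP /ord_inj.
Qed.

Lemma cell_vertices t (j : 'I_p) : (t < N)%N ->
  (j \in cell t) = (j == inord t) || (j == inord t.+1) || (j \in high).
Proof. by move=> tN; rewrite !inE -!val_eqE /= !inordK //; lia. Qed.

Lemma card_cell t : (t < N)%N -> #|cell t| = m.+2.
Proof.
move=> tN; have -> : cell t = inord t |: (inord t.+1 |: high).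
  by apply/setP => j; rewrite cell_vertices // !inE orbA.
by rewrite !cardsU1 card_high !inE -!val_eqE /= !inordK //; lia.
Qed.

Lemma card_cellI_succ t : (t.+1 < N)%N -> #|cell t :&: cell t.+1| = m.+1.
Proof.
move=> tN; have -> : cell t :&: cell t.+1 = inord t.+1 |: high.
  by apply/setP => j; rewrite !inE -!val_eqE /= !inordK //; lia.
by rewrite cardsU1 card_high !inE /= inordK //; lia.
Qed.

Lemma card_cellI_far t u : (t.+2 <= u)%N -> (#|cell t :&: cell u| <= m)%N.
Proof.
move=> tu; rewrite -[X in (_ <= X)%N]card_high subset_leq_card //.
by apply/subsetP => j; rewrite !inE; lia.
Qed.

Lemma has_dim_cell t : (t < N)%N -> has_dim (mcone fanmx (cell t)) m.+2.
Proof.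
by move=> tN; have := dual_has_dim (dual_cell tN) (subxx (cell t)); rewrite card_cell.
Qed.

Lemma fan_maximal S : S \in fan ->
  (forall T, T \in fan -> vsubset (mcone fanmx S) (mcone fanmx T) ->
    veq (mcone fanmx S) (mcone fanmx T)) ->
  exists2 t, (t < N)%N & S = cell t.
Proof.
move=> Sfan Smax; have /fanP[t tN sSt] := Sfan; exists t => //.
have /Smax eSt := cell_in_fan tN; have {}eSt := eSt (mcone_subset sSt).
apply/eqP; rewrite eqEsubset sSt mcone_fan_subset ?cell_in_fan //.
by move=> x /eSt.
Qed.

Lemma fanmx_is_fan : is_fan fanmx fan.
Proof.
split.
- move=> S T Sfan Tfan eST; apply/eqP; rewrite eqEsubset.
  by rewrite !mcone_fan_subset // => x /eST.
- move=> S F Sfan [c [c_ge0 eF]]; exists [set j in S | colval fanmx c j == 0].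
    by apply: (fan_subset Sfan); apply/subsetP => j; rewrite inE => /andP[].
  exact/veq_sym/(veq_trans eF)/face_mcone.
- move=> S T Sfan Tfan; have eST := veq_sym (mconeI_fan Sfan Tfan).
  have /fanP[t tN sSt] := Sfan; have /fanP[u uN sTu] := Tfan.
  split; apply: is_face_veq eST _; first exact: (dual_face (dual_cell tN) (subsetIl S T) sSt).
  by rewrite setIC; exact: (dual_face (dual_cell uN) (subsetIl T S) sTu).
- by move=> S Sfan /(fan_maximal Sfan)[t tN ->]; apply: has_dim_cell.
Qed.

Lemma fanmx_is_simplicial : is_simplicial fanmx fan.
Proof.
move=> S /fanP[t tN sSt] /has_dim_mcone_le S_ge; apply/eqP.
by rewrite eqn_leq S_ge andbT -(card_cell tN) subset_leq_card.
Qed.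

Lemma Gamma_cell t : (t < N)%N -> Gamma_n fanmx fan (cell t).
Proof. by move=> tN; split; [apply: cell_in_fan | apply: has_dim_cell]. Qed.

Lemma GammaP S : Gamma_n fanmx fan S -> exists2 t, (t < N)%N & S = cell t.
Proof.
move=> [Sfan Sdim]; have /fanP[t tN sSt] := Sfan; exists t => //.
apply/eqP; rewrite eqEcard sSt card_cell // (fanmx_is_simplicial Sfan Sdim) /=; exact: ltnSn.
Qed.

Lemma cell_inj t u : (t < N)%N -> (u < N)%N -> cell t = cell u -> t = u.
Proof.
move=> tN uN e_tu.
have : (inord t : 'I_p) \in cell u by rewrite -e_tu inE inordK ?eqxx //; lia.
have : (inord u : 'I_p) \in cell t by rewrite e_tu inE inordK ?eqxx //; lia.
by rewrite !inE !inordK //; lia.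
Qed.

Lemma fan_adj_succ t : (t.+1 < N)%N -> fan_adj fanmx (cell t) (cell t.+1).
Proof.
move=> tN; have tN' : (t < N)%N by lia.
apply: has_dim_veq (veq_sym (mconeI_fan (cell_in_fan tN') (cell_in_fan tN))) _.
have := dual_has_dim (dual_cell tN') (subsetIl (cell t) (cell t.+1)).
by rewrite card_cellI_succ.
Qed.

Lemma fan_adj_far t u : (t.+2 <= u)%N -> (u < N)%N -> ~ fan_adj fanmx (cell t) (cell u).
Proof.
move=> tu uN /(has_dim_veq (mconeI_fan (cell_in_fan _) (cell_in_fan uN))).
by move=> /(_ _)/has_dim_mcone_le; have := card_cellI_far tu; lia.
Qed.

Local Notation reach := (reach (Gamma_n fanmx fan) (fan_adj fanmx)).

Lemma reach_cell t s : (t <= s < N)%N ->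
  reach (s - t) (cell t) (cell s) /\ reach (s - t) (cell s) (cell t).
Proof.
move=> /andP[ts sN]; split.
  have := @reach_path _ _ _ (fun i => cell (t + i)) (s - t); rewrite addn0 subnKC //.
  apply=> i lt_i; split; first by apply: Gamma_cell; lia.
  by rewrite addnS; apply: fan_adj_succ; lia.
have := @reach_path _ _ _ (fun i => cell (s - i)) (s - t); rewrite subn0 subKn //.
apply=> i lt_i; split; first by apply: Gamma_cell; lia.
have -> : (s - i = (s - i.+1).+1)%N by lia.
by apply/fan_adjC/fan_adj_succ; lia.
Qed.

Lemma reach_cell0 d b : (b < N)%N -> reach d (cell 0) (cell b) -> (b <= d)%N.
Proof.
elim: d b => [|d IH] b bN /=; first by move=> /cell_inj <-; rewrite ?double_gt0 ?apex_gt0.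
case=> [/(IH _ bN)/leqW //|[w [[wfan wdim] [rw ew]]]].
have [c cN wc] := GammaP (conj wfan wdim); rewrite {}wc in rw ew.
have := IH c cN rw; case: (leqP b c.+1) => bc; first lia.
by have := fan_adj_far bc bN.
Qed.

Lemma fanmx_diam : graph_diam (Gamma_n fanmx fan) (fan_adj fanmx) N.-1.
Proof.
have N_gt0 : (0 < N)%N by rewrite double_gt0 apex_gt0.
split=> [S T /GammaP[t tN ->] /GammaP[s sN ->]|d reach_d].
  have [ts|st] := leqP t s.
    by apply: reach_le (proj1 (reach_cell _)); lia.
  by apply: reach_le (proj2 (reach_cell _)); lia.
by apply: reach_cell0; last apply: reach_d; rewrite ?prednK //; apply: Gamma_cell; lia.
Qed.

Definition colnorm1 (j : 'I_p) : R := \sum_i `|fanmx i j|.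

Lemma inflator_ge1 : 1 <= inflator.
Proof.
rewrite /inflator ler_pdivlMr ?scale_gt0 // mul1r /scale /apex ler_nat.
by elim: k => // e IH; rewrite !expnS leq_mul.
Qed.

Lemma colnorm1_low (j : 'I_p) : (j <= N.+1)%N -> colnorm1 j = `|xrow j| + `|yrow j|.
Proof.
move=> hj; rewrite /colnorm1 !big_ord_recl big1 ?addr0 => [|i _]; first by rewrite !mxE.
by rewrite fanmx_low ?normr0.
Qed.

Lemma colnorm1_inflator : colnorm1 (inord N.+1) = inflator.
Proof.
have N1p : (N.+1 < p)%N by lia.
rewrite colnorm1_low inordK // /xrow /yrow ltnn eqxx normr0 addr0 ger0_norm //.
exact: le_trans inflator_ge1.
Qed.

Lemma colnorm1_le1 (j : 'I_p) : j != inord N.+1 -> colnorm1 j <= 1.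
Proof.
rewrite -val_eqE /= inordK; last lia.
move=> j_neq; have [j_vert|j_high] := leqP j N.
  by rewrite colnorm1_low ?xrow_vertex ?yrow_vertex ?l1_norm_vertex //; lia.
rewrite /colnorm1 (bigD1 (inord (j - N))) //= fanmx_high ?inordK; try by have := ltn_ord j; lia.
rewrite eqxx normr1 big1 ?addr0 // => i.
rewrite -val_eqE /= inordK; last by have := ltn_ord j; lia.
by move=> i_neq; rewrite fanmx_high ?(negbTE i_neq) ?normr0 //; lia.
Qed.

(* Hadamard's bound with l1-norms: every column other than [N+1] has norm at
   most 1, and a nonsingular square submatrix uses column [N+1] at most once. *)
Lemma det_colsub_le (f : 'I_(m.+2) -> 'I_p) : `|\det (colsub f fanmx)| <= inflator.
Proof.
have infl_ge0 : 0 <= inflator := le_trans ler01 inflator_ge1.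
have [f_inj|/injectivePn[i1 [i2 i12 fi12]]] := boolP (injectiveb f); last first.
  by rewrite -det_tr (determinant_alternate i12) ?normr0 // => j; rewrite !mxE fi12.
apply: le_trans (normr_det_le_prod_sum _) _.
have colnorm1_ge0 j : 0 <= colnorm1 j by apply: sumr_ge0.
rewrite (eq_bigr (fun j => colnorm1 (f j))) => [|j _]; last first.
  by apply: eq_bigr => i _; rewrite mxE.
have [j0 /eqP fj0|no_infl] := pickP (fun j => f j == inord N.+1).
  rewrite (bigD1 j0) //= fj0 colnorm1_inflator ler_piMr // prodr_ile1 // => j j_neq.
  by rewrite colnorm1_ge0 colnorm1_le1 // -fj0 (inj_eq (injectiveP _ f_inj)).
apply: le_trans inflator_ge1; apply: prodr_ile1 => j _.
by rewrite colnorm1_ge0 colnorm1_le1 ?no_infl.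
Qed.

Definition pick2 (c0 c1 : nat) : {ffun 'I_(m.+2) -> 'I_p} :=
  [ffun i : 'I_(m.+2) => if i == 0 :> nat then inord c0
                         else if i == 1 :> nat then inord c1 else inord (N + i)].

Lemma det_pick2 c0 c1 : (c0 <= N.+1)%N -> (c1 <= N.+1)%N ->
  \det (colsub (pick2 c0 c1) fanmx) = xrow c0 * yrow c1 - xrow c1 * yrow c0.
Proof.
move=> c0N c1N; rewrite det_id_outside_ul2 => [|i j i_or_j].
  by rewrite !mxE !ffunE /= !inordK //; lia.
have j_lt := ltn_ord j; rewrite mxE ffunE.
case: ifP => [/eqP j0|j0]; [|case: ifP => [/eqP j1|j1]].
- by rewrite fanmx_low ?inordK //; try lia; case: eqP => // /(congr1 val) /=; lia.
- by rewrite fanmx_low ?inordK //; try lia; case: eqP => // /(congr1 val) /=; lia.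
rewrite fanmx_high inordK; try lia.
by congr (_%:R); rewrite -val_eqE /=; apply/eqP; case: eqP; lia.
Qed.

Lemma Delta_fanmx : Delta fanmx = inflator.
Proof.
apply/le_anti/andP; split.
  by apply: bigmax_le => [|f _]; [exact: le_trans inflator_ge1 | exact: det_colsub_le].
have apexN : (apex k <= N)%N by rewrite /nedges -addnn leq_addr.
apply: le_trans (le_bigmax_cond _ (j := pick2 N.+1 (apex k)) _ _) => //.
rewrite det_pick2 ?[xrow (apex k)]xrow_vertex ?[yrow (apex k)]yrow_vertex //; last lia.
rewrite px_apex py_apex.
rewrite /xrow /yrow ltnn eqxx mulr1 mul0r subr0 ger0_norm //.
exact: le_trans inflator_ge1.
Qed.

Lemma pick2_val t (i : 'I_(m.+2)) : (t < N)%N ->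
  pick2 t t.+1 i =
    (if i == 0 :> nat then t else if i == 1 :> nat then t.+1 else N + i)%N :> nat.
Proof.
move=> tN; have i_lt := ltn_ord i; rewrite ffunE.
by case: ifP => [i0|_]; [|case: ifP => [i1|_]]; rewrite ?i0 ?i1 inordK //; lia.
Qed.

Lemma pick2_inj t : (t < N)%N -> injective (pick2 t t.+1).
Proof.
move=> tN i j /(congr1 (@nat_of_ord _)); rewrite !pick2_val // => e.
by apply: ord_inj; move: e; do ![case: eqP => ?]; lia.
Qed.

Lemma pick2_img t : (t < N)%N -> pick2 t t.+1 @: setT = cell t.
Proof.
move=> tN; apply/eqP; rewrite eqEcard card_imset; last exact: pick2_inj.
rewrite cardsT card_ord card_cell // leqnn andbT.
apply/subsetP => _ /imsetP[i _ ->]; rewrite inE pick2_val //.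
have i_lt := ltn_ord i.
by case: ifP => [/eqP i0|i0]; [|case: ifP => [/eqP i1|i1]]; rewrite ?eqxx ?orbT //; lia.
Qed.

Lemma absdet_cell t : (t < N)%N -> absdet fanmx (cell t) = sc^-1.
Proof.
move=> tN; rewrite (absdet_colsub fanmx (pick2_inj tN) (pick2_img tN)) det_pick2; try lia.
rewrite !xrow_vertex ?yrow_vertex; try lia.
have -> : px t * py t.+1 - px t.+1 * py t = pdet t t.+1 by rewrite /pdet; ring.
by rewrite pdet_succ // ger0_norm // invr_ge0 ltW // scale_gt0.
Qed.

Lemma Delta_min_fanmx : Delta_min fanmx fan = sc^-1.
Proof.
have N_gt0 : (0 < N)%N by rewrite double_gt0 apex_gt0.
apply/le_anti/andP; split.
  rewrite -(absdet_cell N_gt0); apply: bigmin_le_cond.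
  by rewrite cell_in_fan //=; apply/asboolP/has_dim_cell.
apply: le_bigmin => [|S /andP[Sfan /asboolP Sdim]].
  rewrite Delta_fanmx; apply: le_trans inflator_ge1.
  by rewrite invf_le1 ?scale_gt0 ?scale_ge1.
by have [t tN ->] := GammaP (conj Sfan Sdim); rewrite absdet_cell.
Qed.

End Construction.

Lemma powR_exp_log2 (R : realType) (x : R) (k : nat) :
  1 < x -> powR (x ^+ k) (1 / (ln x / ln 2)) = 2 ^+ k.
Proof.
move=> x_gt1; have x_gt0 : 0 < x := lt_trans ltr01 x_gt1.
have lnx_gt0 : 0 < ln x by apply: ln_gt0.
have ln2_gt0 : 0 < ln (2 : R) by apply: ln_gt0; rewrite ltr1n.
rewrite /powR expf_eq0 gt_eqF // andbF lnXn //.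
have -> : 1 / (ln x / ln 2) * (ln x *+ k) = k%:R * ln 2.
  by rewrite -mulr_natr; field; rewrite mul1r !gt_eqF.
by rewrite expRM_natl lnK // posrE.
Qed.

Theorem proposition6 (R : realType) (n : nat) (hn : (2 <= n)%N) :
  forall k : nat, exists (p : nat) (M : 'M[R]_(n, p)) (Fam : {set {set 'I_p}}),
    [/\ is_fan M Fam, is_simplicial M Fam,
        graph_diam (Gamma_n M Fam) (fan_adj M) (2 ^ k.+1 - 1)%N &
        ((2 ^ k.+1 - 1)%N%:R : R) =
          2 * powR (Delta M / Delta_min M Fam) (1 / (ln (n%:R : R) / ln 2)) - 1].
Proof.
case: n hn => [|[|m]] // _ k.
have N_pow2 : nedges k = (2 ^ k.+1)%N by rewrite /nedges /apex expnS mul2n.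
exists _, (fanmx R m k), (fan m k); split.
- exact: fanmx_is_fan.
- exact: fanmx_is_simplicial.
- by rewrite -N_pow2 subn1; apply: fanmx_diam.
rewrite Delta_fanmx Delta_min_fanmx /inflator invrK -mulrA mulVf ?gt_eqF ?scale_gt0 //.
by rewrite mulr1 natrX powR_exp_log2 ?ltr1n // natrB ?expn_gt0 // natrX exprS.
Qed.
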